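(* For any finite alphabet $\mathfrak{G}$, the $\mathfrak{G}$-prefix poset is a meet-semilattice for the operation $\wedge$. Moreover, each interval $[\mathfrak{s},\mathfrak{t}]$ of this poset is a distributive lattice for the operations $\wedge$ and $\vee$.
   Context: $\mathfrak{G}$ is a finite alphabet (letters with arities $\geq 1$). A $\mathfrak{G}$-tree is either the leaf (the tree with no internal node) or $\mathtt{a}[\mathfrak{t}_1,\dots,\mathfrak{t}_{|\mathtt{a}|}]$, a root decorated by $\mathtt{a}\in\mathfrak{G}$ with children $\mathfrak{t}_1,\dots,\mathfrak{t}_{|\mathtt{a}|}$. The $\mathfrak{G}$-prefix poset is the set of $\mathfrak{G}$-trees ordered by $\mathfrak{s}\preceq\mathfrak{t}$ iff $\mathfrak{s}$ is a prefix of $\mathfrak{t}$, i.e. $\mathfrak{t}$ is obtained by grafting some $\mathfrak{G}$-trees onto the leaves of $\mathfrak{s}$. The intersection $\wedge$ is defined by: $\mathfrak{t}\wedge\text{leaf} = \text{leaf} = \text{leaf}\wedge\mathfrak{t}$; $\mathtt{a}[\dots]\wedge\mathtt{b}[\dots] = \text{leaf}$ if $\mathtt{a}\neq\mathtt{b}$; $\mathtt{a}[\mathfrak{t}_1,\dots,\mathfrak{t}_k]\wedge\mathtt{a}[\mathfrak{t}'_1,\dots,\mathfrak{t}'_k] = \mathtt{a}[\mathfrak{t}_1\wedge\mathfrak{t}'_1,\dots,\mathfrak{t}_k\wedge\mathfrak{t}'_k]$. The partial union $\vee$ is defined by: $\mathfrak{t}\vee\text{leaf} = \mathfrak{t} =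 \text{leaf}\vee\mathfrak{t}$; $\mathtt{a}[\mathfrak{t}_1,\dots,\mathfrak{t}_k]\vee\mathtt{a}[\mathfrak{t}'_1,\dots,\mathfrak{t}'_k] = \mathtt{a}[\mathfrak{t}_1\vee\mathfrak{t}'_1,\dots,\mathfrak{t}_k\vee\mathfrak{t}'_k]$; and it is undefined on two trees whose roots have different decorations. *)

From mathcomp Require Import all_boot.
Set Implicit Arguments. Unset Strict Implicit. Unset Printing Implicit Defensive.

Section Trees.
Variable G : finType.
Variable ar : G -> nat.

Inductive tree : Type :=
  | Leaf : tree
  | Node : G -> seq tree -> tree.

Fixpoint gwf (t : tree) : bool :=
  match t with
  | Leaf => true
  | Node a ts =>
      (size ts == ar a) &&
      (fix go (l : seq tree) : bool :=
         match l with [::] => true | x :: xs => gwf x && go xs end) ts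
  end.

(* s is a gprefix of t: t is obtained by grafting trees on the leaves of s. *)
Fixpoint gprefix (s t : tree) : bool :=
  match s, t with
  | Leaf, _ => true
  | Node _ _, Leaf => false
  | Node a ss, Node b ts =>
      (a == b) &&
      (fix go (l1 l2 : seq tree) : bool :=
         match l1, l2 with
         | [::], [::] => true
         | x :: xs, y :: ys => gprefix x y && go xs ys
         | _, _ => false
         end) ss ts
  end.

Fixpoint gmeet (s t : tree) : tree :=
  match s, t with
  | Node a ss, Node b ts =>
      if a == b then
        Node a ((fix go (l1 l2 : seq tree) : seq tree :=
                   match l1, l2 with
                   | x :: xs, y :: ys => gmeet x y :: go xs ys
                   | _, _ => [::]
                   end) ss ts)
      else Leaf
  | _, _ => Leaf
  end.

Fixpoint gjoin (s t : tree) : option tree :=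
  match s, t with
  | Leaf, _ => Some t
  | _, Leaf => Some s
  | Node a ss, Node b ts =>
      if a == b then
        match (fix go (l1 l2 : seq tree) : option (seq tree) :=
                 match l1, l2 with
                 | [::], [::] => Some [::]
                 | x :: xs, y :: ys =>
                     match gjoin x y, go xs ys with
                     | Some z, Some zs => Some (z :: zs)
                     | _, _ => None
                     end
                 | _, _ => None
                 end) ss ts with
        | Some us => Some (Node a us)
        | None => None
        end
      else None
  end.

End Trees.

From mathcomp Require Import all_boot.
From Stdlib Require List.
Set Implicit Arguments. Unset Strict Implicit. Unset Printing Implicit Defensive.

(* All operations recurse on two trees simultaneously, so every property of
   prefix, intersection and union reduces, at a common root, to the same
   property of the children compared position by position.  The one global
   fact is that two prefixes of a common tree carry the same letter wherever
   both have a node; hence their partial union is defined, which makes every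
   interval [s, t] closed under both operations.  Distributivity then holds
   node by node. *)

Section GTrees.
Variable G : finType.

Fixpoint tree_ind_forall (P : tree G -> Prop) (P_leaf : P (Leaf G))
    (P_node : forall a ts, List.Forall P ts -> P (Node a ts)) (t : tree G) : P t :=
  match t with
  | Leaf => P_leaf
  | Node a ts =>
      P_node a ts ((fix go (l : seq (tree G)) : List.Forall P l :=
        match l with
        | [::] => List.Forall_nil P
        | x :: xs => List.Forall_cons x (tree_ind_forall P_leaf P_node x) (go xs)
        end) ts)
  end.

(* The inner fixpoints of [gmeet] and [gjoin], named so that the node
   equations below hold by conversion. *)
Definition gmeet_seq := fix go (l1 l2 : seq (tree G)) : seq (tree G) :=
  match l1, l2 with
  | x :: xs, y :: ys => gmeet x y :: go xs ys
  | _, _ => [::]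
  end.

Definition gjoin_seq := fix go (l1 l2 : seq (tree G)) : option (seq (tree G)) :=
  match l1, l2 with
  | [::], [::] => Some [::]
  | x :: xs, y :: ys =>
      match gjoin x y, go xs ys with
      | Some z, Some zs => Some (z :: zs)
      | _, _ => None
      end
  | _, _ => None
  end.

Lemma gprefix_node a b ss ts :
  gprefix (Node a ss) (Node b ts) = (a == b) && all2 (@gprefix G) ss ts.
Proof. by []. Qed.

Lemma gwf_node (ar : G -> nat) a ts :
  gwf ar (Node a ts) = (size ts == ar a) && all (gwf ar) ts.
Proof. by []. Qed.

Lemma gmeet_node a b ss ts :
  gmeet (Node a ss) (Node b ts) = if a == b then Node a (gmeet_seq ss ts) else Leaf G.
Proof. by []. Qed.

Lemma gjoin_node a b ss ts :
  gjoin (Node a ss) (Node b ts) =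
  if a == b then omap (Node a) (gjoin_seq ss ts) else None.
Proof. by rewrite /= -/(gjoin_seq ss ts); case: gjoin_seq. Qed.

Lemma gjoin_seq_cons x y xs ys :
  gjoin_seq (x :: xs) (y :: ys) =
  match gjoin x y, gjoin_seq xs ys with
  | Some z, Some zs => Some (z :: zs)
  | _, _ => None
  end.
Proof. by []. Qed.

Lemma gjoin_seq_consP x y xs ys js :
  gjoin_seq (x :: xs) (y :: ys) = Some js ->
  exists z zs, [/\ gjoin x y = Some z, gjoin_seq xs ys = Some zs & js = z :: zs].
Proof.
rewrite gjoin_seq_cons; case: gjoin => [z|] //.
by case: gjoin_seq => [zs|] // [<-]; exists z, zs.
Qed.

Lemma gjoin_leafr (t : tree G) : gjoin t (Leaf G) = Some t.
Proof. by case: t. Qed.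

Lemma gprefix_refl (t : tree G) : gprefix t t.
Proof.
elim/tree_ind_forall: t => [|a ts IH] //; rewrite gprefix_node eqxx /=.
by elim: ts IH => [|x xs IHl] //= /List.Forall_cons_iff[-> /IHl].
Qed.

Lemma gprefix_anti (s t : tree G) : gprefix s t -> gprefix t s -> s = t.
Proof.
elim/tree_ind_forall: s t => [|a ss IH] [|b ts] //.
rewrite !gprefix_node => /andP[/eqP<- st] /andP[_ ts_]; congr Node.
elim: ss ts IH st ts_ => [|x xs IHl] [|y ys] //= /List.Forall_cons_iff[Hx Hxs].
by move=> /andP[xy xsys] /andP[yx ysxs]; rewrite (Hx y xy yx) (IHl ys Hxs xsys ysxs).
Qed.

Lemma gprefix_trans (s t u : tree G) : gprefix s t -> gprefix t u -> gprefix s u.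
Proof.
elim/tree_ind_forall: s t u => [|a ss IH] [|b ts] [|c us] //.
rewrite !gprefix_node => /andP[/eqP<- st] /andP[/eqP<- tu]; rewrite eqxx /=.
elim: ss ts us IH st tu => [|x xs IHl] [|y ys] [|z zs] //= /List.Forall_cons_iff[Hx Hxs].
by move=> /andP[xy xsys] /andP[yz yszs]; rewrite (Hx y z xy yz) (IHl ys zs Hxs xsys yszs).
Qed.

Lemma gmeetC (s t : tree G) : gmeet s t = gmeet t s.
Proof.
elim/tree_ind_forall: s t => [|a ss IH] [|b ts] //; rewrite !gmeet_node eq_sym.
case: eqP => [<-|//]; congr Node.
by elim: ss ts IH => [|x xs IHl] [|y ys] //= /List.Forall_cons_iff[-> /IHl->].
Qed.

Lemma gprefix_gmeet (u s t : tree G) :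
  gprefix u s -> gprefix u t -> gprefix u (gmeet s t).
Proof.
elim/tree_ind_forall: u s t => [|a us IH] [|b ss] [|c ts] //.
rewrite !gprefix_node gmeet_node => /andP[/eqP<- us_] /andP[/eqP<- ut].
rewrite eqxx gprefix_node eqxx /=.
elim: us ss ts IH us_ ut => [|x xs IHl] [|y ys] [|z zs] //= /List.Forall_cons_iff[Hx Hxs].
by move=> /andP[xy xsys] /andP[xz xszs]; rewrite (Hx y z xy xz) (IHl ys zs Hxs xsys xszs).
Qed.

Lemma gjoinC (s t : tree G) : gjoin s t = gjoin t s.
Proof.
elim/tree_ind_forall: s t => [|a ss IH] [|b ts] //; rewrite !gjoin_node eq_sym.
case: eqP => [<-|//]; congr omap.
elim: ss ts IH => [|x xs IHl] [|y ys] // /List.Forall_cons_iff[Hx Hxs].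
by rewrite !gjoin_seq_cons Hx IHl.
Qed.

Lemma gjoin_bounded (u v t : tree G) :
  gprefix u t -> gprefix v t -> exists j, gjoin u v = Some j.
Proof.
elim/tree_ind_forall: u v t => [|a us IH] [|b vs] [|c ts] //; try by eexists.
rewrite !gprefix_node gjoin_node => /andP[/eqP-> ut] /andP[/eqP-> vt]; rewrite eqxx.
suff [js ->] : exists js, gjoin_seq us vs = Some js by eexists.
elim: us vs ts IH ut vt => [|x xs IHl] [|y ys] [|z zs] //; try by eexists.
move=> /List.Forall_cons_iff[Hx Hxs] /andP[xz xszs] /andP[yz yszs].
have [j xyj] := Hx y z xz yz; have [js xsysjs] := IHl ys zs Hxs xszs yszs.
by rewrite gjoin_seq_cons xyj xsysjs; eexists.
Qed.

Lemma gjoin_prefixl (u v j : tree G) : gjoin u v = Some j -> gprefix u j.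
Proof.
elim/tree_ind_forall: u v j => [|a us IH] [|b vs] j //.
  by rewrite gjoin_leafr => -[<-]; apply: gprefix_refl.
rewrite gjoin_node; case: eqP => // _.
case E: gjoin_seq => [js|] // [<-]; rewrite gprefix_node eqxx /=.
elim: us vs js IH E => [|x xs IHl] [|y ys] js //; first by move=> _ [<-].
move=> /List.Forall_cons_iff[Hx Hxs] /gjoin_seq_consP[z [zs [xyz xsyszs ->]]] /=.
by rewrite (Hx _ _ xyz) (IHl _ _ Hxs xsyszs).
Qed.

Lemma gjoin_prefixr (u v j : tree G) : gjoin u v = Some j -> gprefix v j.
Proof. by rewrite gjoinC; apply: gjoin_prefixl. Qed.

Lemma gjoin_lub (u v j z : tree G) :
  gjoin u v = Some j -> gprefix u z -> gprefix v z -> gprefix j z.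
Proof.
elim/tree_ind_forall: u v j z => [|a us IH] [|b vs] j z;
  [by move=> [<-] .. | idtac].
rewrite gjoin_node; case: eqP => // _.
case E: gjoin_seq => [js|] // [<-]; case: z => [|c zs] //; rewrite !gprefix_node.
move=> /andP[-> uz] /andP[_ vz] /=.
elim: us vs js zs IH E uz vz => [|x xs IHl] [|y ys] js [|w ws] //; first by move=> _ [<-].
move=> /List.Forall_cons_iff[Hx Hxs] /gjoin_seq_consP[k [ks [xyk xsysks ->]]].
move=> /andP[xw xsws] /andP[yw ysws] /=.
by rewrite (Hx _ _ _ xyk xw yw) (IHl _ _ _ Hxs xsysks xsws ysws).
Qed.

Lemma gmeetUr (u v w t : tree G) : gprefix u t -> gprefix v t -> gprefix w t ->
  omap (gmeet u) (gjoin v w) = gjoin (gmeet u v) (gmeet u w).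
Proof.
elim/tree_ind_forall: u v w t => [|a us IH] v w t.
  by move=> _ vt wt; have [j ->] := gjoin_bounded vt wt.
case: t => [|c ts] //; case: v => [|b vs] //; case: w => [|d ws].
  by move=> *; rewrite !gjoin_leafr.
rewrite !gprefix_node => /andP[/eqP-> ut] /andP[/eqP-> vt] /andP[/eqP-> wt].
rewrite gjoin_node !gmeet_node !eqxx gjoin_node eqxx.
have -> : omap (gmeet (Node c us)) (omap (Node c) (gjoin_seq vs ws)) =
          omap (Node c) (omap (gmeet_seq us) (gjoin_seq vs ws)).
  by case: gjoin_seq => //= js; rewrite eqxx.
congr omap.
elim: us vs ws ts IH ut vt wt => [|x xs IHl] [|y ys] [|z zs] [|r rs] //.
move=> /List.Forall_cons_iff[Hx Hxs] /andP[xr xsrs] /andP[yr ysrs] /andP[zr zsrs].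
rewrite !gjoin_seq_cons -(Hx _ _ _ xr yr zr) -(IHl _ _ _ Hxs xsrs ysrs zsrs).
by case: (gjoin y z) => [j|]; case: (gjoin_seq ys zs).
Qed.

Section WellFormed.
Variable ar : G -> nat.

Lemma gmeet_wf (s t : tree G) : gwf ar s -> gwf ar t -> gwf ar (gmeet s t).
Proof.
elim/tree_ind_forall: s t => [|a ss IH] [|b ts] //; rewrite gmeet_node.
case: eqP => [<-|//]; rewrite !gwf_node => /andP[/eqP <- wss] /andP[/eqP sz wts].
elim: ss ts IH wss wts sz => [|x xs IHl] [|y ys] //= /List.Forall_cons_iff[Hx Hxs].
move=> /andP[wx wxs] /andP[wy wys] [/(IHl ys Hxs wxs wys)/andP[/eqP-> ->]].
by rewrite (Hx y wx wy) eqxx.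
Qed.

Lemma gmeet_prefixl (s t : tree G) : gwf ar s -> gwf ar t -> gprefix (gmeet s t) s.
Proof.
elim/tree_ind_forall: s t => [|a ss IH] [|b ts] //; rewrite gmeet_node.
case: eqP => [<-|//]; rewrite !gwf_node gprefix_node eqxx /=.
move=> /andP[/eqP szs wss] /andP[/eqP szt wts]; have := etrans szs (esym szt).
elim: ss ts IH wss wts {szs szt} => [|x xs IHl] [|y ys] //= /List.Forall_cons_iff[Hx Hxs].
by move=> /andP[wx wxs] /andP[wy wys] [/(IHl ys Hxs wxs wys)->]; rewrite (Hx y wx wy).
Qed.

Lemma gmeet_prefixr (s t : tree G) : gwf ar s -> gwf ar t -> gprefix (gmeet s t) t.
Proof. by move=> ws wt; rewrite gmeetC gmeet_prefixl. Qed.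

Lemma gjoin_wf (u v j : tree G) : gjoin u v = Some j -> gwf ar u -> gwf ar v -> gwf ar j.
Proof.
elim/tree_ind_forall: u v j => [|a us IH] [|b vs] j;
  [by move=> [<-] .. | idtac].
rewrite gjoin_node; case: eqP => // _.
case E: gjoin_seq => [js|] // [<-]; rewrite !gwf_node => /andP[/eqP <- wus] /andP[_ wvs].
elim: us vs js IH E wus wvs => [|x xs IHl] [|y ys] js //; first by move=> _ [<-].
move=> /List.Forall_cons_iff[Hx Hxs] /gjoin_seq_consP[k [ks [xyk xsysks ->]]].
move=> /andP[wx wxs] /andP[wy wys] /=.
have /andP[/eqP szks wks] := IHl _ _ Hxs xsysks wxs wys.
by rewrite szks eqxx (Hx _ _ xyk wx wy) wks.
Qed.

End WellFormed.
End GTrees.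

Unset Implicit Arguments.

Theorem proposition3p5 (G : finType) (ar : G -> nat)
  (ar_pos : forall a : G, 0 < ar a) :
  (* the gprefix order is a partial order on G-trees *)
  (forall s, gwf ar s -> gprefix s s) /\
  (forall s t, gwf ar s -> gwf ar t -> gprefix s t -> gprefix t s -> s = t) /\
  (forall s t u, gwf ar s -> gwf ar t -> gwf ar u ->
     gprefix s t -> gprefix t u -> gprefix s u) /\
  (* gmeet-semilattice for the intersection *)
  (forall s t, gwf ar s -> gwf ar t ->
     [/\ gwf ar (gmeet s t), gprefix (gmeet s t) s, gprefix (gmeet s t) t &
         forall u, gwf ar u -> gprefix u s -> gprefix u t -> gprefix u (gmeet s t)]) /\
  (* every interval [s, t] is a distributive lattice for gmeet and gjoin *)
  (forall s t, gwf ar s -> gwf ar t ->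
     (forall u v, gwf ar u -> gwf ar v ->
        gprefix s u -> gprefix u t -> gprefix s v -> gprefix v t ->
        (gprefix s (gmeet u v) /\ gprefix (gmeet u v) t) /\
        (exists j, gjoin u v = Some j /\ gwf ar j /\ gprefix s j /\ gprefix j t /\
                       gprefix u j /\ gprefix v j /\
                       forall z, gwf ar z -> gprefix s z -> gprefix z t ->
                         gprefix u z -> gprefix v z -> gprefix j z)) /\
     (forall u v w, gwf ar u -> gwf ar v -> gwf ar w ->
        gprefix s u -> gprefix u t -> gprefix s v -> gprefix v t ->
        gprefix s w -> gprefix w t ->
        omap (gmeet u) (gjoin v w) = gjoin (gmeet u v) (gmeet u w))).
Proof.
split; first by move=> s _; apply: gprefix_refl.
split; first by move=> s t _ _; apply: gprefix_anti.
split; first by move=> s t u _ _ _; apply: gprefix_trans.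
split.
  move=> s t ws wt; split; [exact: gmeet_wf | exact: gmeet_prefixl ws wt |
                             exact: gmeet_prefixr ws wt | by move=> u _; apply: gprefix_gmeet].
move=> s t _ _; split=> [u v wu wv su ut sv vt|u v w _ _ _ _ ut _ vt _ wt]; last first.
  exact: gmeetUr ut vt wt.
split; first by split; [apply: gprefix_gmeet | apply: gprefix_trans (gmeet_prefixl wu wv) ut].
have [j uvj] := gjoin_bounded ut vt.
exists j; split=> //; split; first exact: gjoin_wf uvj wu wv.
split; first exact: gprefix_trans su (gjoin_prefixl uvj).
split; first exact: gjoin_lub uvj ut vt.
split; first exact: gjoin_prefixl uvj.
split; first exact: gjoin_prefixr uvj.
by move=> z _ _ _; apply: gjoin_lub uvj.
Qed.
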